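(* Fix measurable $\pi_0,\pi_1:\mathcal X\to\{0,1\}$ and set $\tau(X)=\mu(X,1)-\mu(X,0)$, $$\mathrm{FNA}^-_{\pi_0\to\pi_1}=E_P\big[\max\{(\pi_0(X)-\pi_1(X))\tau(X),\,0\}\big],$$ $$\mathrm{FNA}^+_{\pi_0\to\pi_1}=E_P\Big[\min\big\{\pi_1(X)(1-\pi_0(X))\mu(X,0)+\pi_0(X)(1-\pi_1(X))(1-\mu(X,0)),\ \pi_1(X)(1-\pi_0(X))(1-\mu(X,1))+\pi_0(X)(1-\pi_1(X))\mu(X,1)\big\}\Big].$$ Then the identified set is exactly the closed interval $\mathcal S(\mathrm{FNA}_{\pi_0\to\pi_1};P)=[\mathrm{FNA}^-_{\pi_0\to\pi_1},\,\mathrm{FNA}^+_{\pi_0\to\pi_1}]$. In particular, for the constant policies $\pi_0\equiv0,\pi_1\equiv1$, the identified set of $\mathrm{FNA}=\mathbb P(Y(0)=1,Y(1)=0)$ is $[-E_P[\min\{\tau(X),0\}],\ E_P[\min\{\mu(X,0),1-\mu(X,1)\}]]$.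
   Context: Let $\mathcal X$ be a measurable covariate space. A full (unobservable) distribution $\mathbb P$ is a law of $(X,A,Y(0),Y(1))$ with $X\in\mathcal X$, $A\in\{0,1\}$, $Y(0),Y(1)\in\{0,1\}$. The coarsening map $\mathcal C(x,a,y_0,y_1)=(x,a,ay_1+(1-a)y_0)$ induces the observed-data distribution $P=\mathbb P\circ\mathcal C^{-1}$ of $(X,A,Y)$, where $Y=Y(A)$. Write $e(X)=P(A=1\mid X)$ and assume overlap: $e(X)\in(0,1)$ a.s. Let $\mu(X,a)=E_P[Y\mid X,A=a]$. For policies $\pi_0,\pi_1:\mathcal X\to\{0,1\}$, define $\mathrm{FNA}_{\pi_0\to\pi_1}(\mathbb P)=\mathbb P\big(Y(\pi_0(X))=1,\,Y(\pi_1(X))=0\big)$. For a parameter $\psi(\mathbb P)$ its identified set is $\mathcal S(\psi;P)=\{\psi(\mathbb P):\ \mathbb P\circ\mathcal C^{-1}=P,\ \mathbb P(A=1\mid X)=\mathbb P(A=1\mid X,Y(a))\text{ for }a=0,1\}$ (the last condition is unconfoundedness). *)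

From HB Require Import structures.
From mathcomp Require Import all_boot all_order all_algebra.
From mathcomp Require Import all_classical all_reals all_analysis.
Set Implicit Arguments. Unset Strict Implicit. Unset Printing Implicit Defensive.
Import Order.TTheory GRing.Theory Num.Theory.
Local Open Scope classical_set_scope.
Local Open Scope ring_scope.

Section FNA.
Context (d : measure_display) (T : measurableType d) (R : realType).

(* Observed law of (X,A,Y): X-marginal mu and conditional pmf
   p x a y = P(A=a, Y=y | X=x). *)
Definition obs_kernel (p : T -> bool -> bool -> R) : Prop :=
  (forall a y, measurable_fun setT (fun x => p x a y)) /\
  (forall x a y, 0 <= p x a y) /\
  (forall x, \sum_(a : bool) \sum_(y : bool) p x a y = 1).

(* Full law of (X,A,Y(0),Y(1)): X-marginal mu and conditional pmf
   q x a y0 y1 = PP(A=a, Y(0)=y0, Y(1)=y1 | X=x). *)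
Definition full_kernel (q : T -> bool -> bool -> bool -> R) : Prop :=
  (forall a y0 y1, measurable_fun setT (fun x => q x a y0 y1)) /\
  (forall x a y0 y1, 0 <= q x a y0 y1) /\
  (forall x, \sum_(a : bool) \sum_(y0 : bool) \sum_(y1 : bool) q x a y0 y1 = 1).

Definition pot (y0 y1 b : bool) : bool := if b then y1 else y0.

Definition coarsen (q : T -> bool -> bool -> bool -> R) (x : T) (a y : bool) : R :=
  \sum_(y0 : bool) \sum_(y1 : bool)
     (q x a y0 y1 * ((pot y0 y1 a == y) : bool)%:R).

Definition full_e (q : T -> bool -> bool -> bool -> R) (x : T) : R :=
  \sum_(y0 : bool) \sum_(y1 : bool) q x true y0 y1.
Definition full_Y (q : T -> bool -> bool -> bool -> R) (x : T) (b y : bool) : R :=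
  \sum_(a : bool) \sum_(y0 : bool) \sum_(y1 : bool)
     (q x a y0 y1 * ((pot y0 y1 b == y) : bool)%:R).
Definition full_AY (q : T -> bool -> bool -> bool -> R) (x : T) (b y : bool) : R :=
  \sum_(y0 : bool) \sum_(y1 : bool)
     (q x true y0 y1 * ((pot y0 y1 b == y) : bool)%:R).

(* unconfoundedness PP(A=1|X) = PP(A=1|X,Y(b)) a.s., b = 0,1:
   on every atom {Y(b)=y} of positive conditional probability. *)
Definition unconfounded (mu : probability T R) (q : T -> bool -> bool -> bool -> R) : Prop :=
  {ae mu, forall x, forall b y : bool,
     0 < full_Y q x b y -> full_AY q x b y / full_Y q x b y = full_e q x}.

Definition FNA (mu : probability T R) (q : T -> bool -> bool -> bool -> R)
  (pi0 pi1 : T -> bool) : \bar R :=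
  (\int[mu]_x (\sum_(a : bool) \sum_(y0 : bool) \sum_(y1 : bool)
     (q x a y0 y1 * (pot y0 y1 (pi0 x) && ~~ pot y0 y1 (pi1 x) : bool)%:R))%:E)%E.

Definition ident_set (mu : probability T R) (p : T -> bool -> bool -> R)
  (pi0 pi1 : T -> bool) : set (\bar R) :=
  [set FNA mu q pi0 pi1 | q in
     [set q | full_kernel q /\
              {ae mu, forall x, forall a y : bool, coarsen q x a y = p x a y} /\
              unconfounded mu q]].

Definition e_obs (p : T -> bool -> bool -> R) (x : T) : R := p x true false + p x true true.
Definition mu_obs (p : T -> bool -> bool -> R) (x : T) (a : bool) : R :=
  p x a true / (p x a false + p x a true).
Definition tau (p : T -> bool -> bool -> R) (x : T) : R :=
  mu_obs p x true - mu_obs p x false.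

Definition FNA_lo (mu : probability T R) (p : T -> bool -> bool -> R)
  (pi0 pi1 : T -> bool) : \bar R :=
  (\int[mu]_x (Num.max (((pi0 x)%:R - (pi1 x)%:R) * tau p x) 0)%:E)%E.

Definition FNA_hi (mu : probability T R) (p : T -> bool -> bool -> R)
  (pi0 pi1 : T -> bool) : \bar R :=
  (\int[mu]_x (Num.min
     ((pi1 x)%:R * (1 - (pi0 x)%:R) * mu_obs p x false
        + (pi0 x)%:R * (1 - (pi1 x)%:R) * (1 - mu_obs p x false))
     ((pi1 x)%:R * (1 - (pi0 x)%:R) * (1 - mu_obs p x true)
        + (pi0 x)%:R * (1 - (pi1 x)%:R) * mu_obs p x true))%:E)%E.

End FNA.

(* Given X = x, coarsening identifies P(A = a, Y(a) = 1 | x) and unconfoundedness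
   factors it as P(A = a | x) P(Y(a) = 1 | x), so the marginals of (Y(0), Y(1)) are
   pinned down: P(Y(a) = 1 | x) = mu(x, a).  The integrand of FNA is an
   off-diagonal cell of the joint law of (Y(0), Y(1)) (or 0 when pi0 x = pi1 x), so
   the Frechet-Hoeffding bounds confine it pointwise to [FNA^-(x), FNA^+(x)].
   Conversely, drawing A from the observed propensity independently of the coupling
   whose off-diagonal cell interpolates linearly between the two Frechet bounds gives
   an admissible unconfounded full law with FNA = (1 - t) FNA^- + t FNA^+, and these
   values fill the interval as t ranges over [0, 1]. *)

From HB Require Import structures.
From mathcomp Require Import all_boot all_order all_algebra.
From mathcomp Require Import all_classical all_reals all_analysis.
From mathcomp Require Import measurable_realfun ring lra.
Set Implicit Arguments. Unset Strict Implicit. Unset Printing Implicit Defensive.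
Import Order.TTheory GRing.Theory Num.Theory.
Local Open Scope classical_set_scope.
Local Open Scope ring_scope.

Section PotentialOutcomeLaws.
Variable R : realFieldType.
Implicit Types (J : bool -> bool -> R) (m : bool -> R) (r t : R).

Definition marginal J (b y : bool) : R :=
  \sum_(y0 : bool) \sum_(y1 : bool) J y0 y1 * (pot y0 y1 b == y)%:R.

Definition fna_prob (b0 b1 : bool) J : R :=
  \sum_(y0 : bool) \sum_(y1 : bool) J y0 y1 * (pot y0 y1 b0 && ~~ pot y0 y1 b1)%:R.

Lemma fna_probE b0 b1 J : fna_prob b0 b1 J =
  if b0 then (if b1 then 0 else J false true) else (if b1 then J true false else 0).
Proof. by rewrite /fna_prob !big_bool; case: b0; case: b1 => /=; ring. Qed.

Definition fna_lower (b0 b1 : bool) m : R :=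
  Num.max ((b0%:R - b1%:R) * (m true - m false)) 0.

Definition fna_upper (b0 b1 : bool) m : R :=
  Num.min (b1%:R * (1 - b0%:R) * m false + b0%:R * (1 - b1%:R) * (1 - m false))
          (b1%:R * (1 - b0%:R) * (1 - m true) + b0%:R * (1 - b1%:R) * m true).

Lemma fna_prob_bounds b0 b1 J m :
  (forall y0 y1, 0 <= J y0 y1) -> \sum_(y0 : bool) \sum_(y1 : bool) J y0 y1 = 1 ->
  (forall b, marginal J b true = m b) ->
  fna_lower b0 b1 m <= fna_prob b0 b1 J <= fna_upper b0 b1 m.
Proof.
move=> J0 J1 Jm; have := Jm false; have := Jm true.
rewrite /marginal !big_bool /= in J1 * => m1 m0.
have := J0 false false; have := J0 false true; have := J0 true false; have := J0 true true.
rewrite fna_probE /fna_lower /fna_upper.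
case: b0; case: b1 => /= *;
  rewrite ?(subrr, mul0r, mulr0, mul1r, mulr1, mulN1r, subr0, addr0, add0r, opprB) //;
  rewrite ?(maxxx, minxx, lexx) //;
  rewrite ge_max !le_min; repeat (apply/andP; split); lra.
Qed.

Lemma fna_upper_ge0 b0 b1 m : (forall b, 0 <= m b <= 1) -> 0 <= fna_upper b0 b1 m.
Proof.
move=> m01; have /andP[? ?] := m01 false; have /andP[? ?] := m01 true.
by rewrite /fna_upper le_min; case: b0; case: b1 => /=; apply/andP; split; lra.
Qed.

(* Frechet-Hoeffding bounds on P(Y(0) = 1, Y(1) = 0) given P(Y(b) = 1) = m b. *)
Definition coupling_lo m : R := Num.max (m false - m true) 0.
Definition coupling_hi m : R := Num.min (m false) (1 - m true).

Definition coupling m r (y0 y1 : bool) : R :=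
  match y0, y1 with
  | true, false => r
  | true, true => m false - r
  | false, true => m true - m false + r
  | false, false => 1 - m true - r
  end.

Lemma coupling_lo_le_hi m : (forall b, 0 <= m b <= 1) -> coupling_lo m <= coupling_hi m.
Proof.
move=> m01; have /andP[? ?] := m01 false; have /andP[? ?] := m01 true.
rewrite /coupling_lo /coupling_hi ge_max !le_min; apply/and3P; split; lra.
Qed.

Lemma coupling_ge0 m r y0 y1 : coupling_lo m <= r <= coupling_hi m -> 0 <= coupling m r y0 y1.
Proof.
rewrite /coupling_lo /coupling_hi ge_max !le_min => /andP[/andP[? ?] /andP[? ?]].
case: y0; case: y1 => /=; lra.
Qed.

Lemma coupling_sum m r : \sum_(y0 : bool) \sum_(y1 : bool) coupling m r y0 y1 = 1.
Proof. rewrite !big_bool /=; ring. Qed.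

Lemma marginal_coupling m r b y :
  marginal (coupling m r) b y = if y then m b else 1 - m b.
Proof. by rewrite /marginal !big_bool; case: b; case: y => /=; ring. Qed.

Lemma fna_prob_coupling_lo b0 b1 m :
  fna_prob b0 b1 (coupling m (coupling_lo m)) = fna_lower b0 b1 m.
Proof.
rewrite fna_probE /fna_lower /coupling_lo.
case: b0; case: b1 => /=;
  rewrite ?(subrr, mul0r, mulN1r, mul1r, opprB, maxxx) //; case: leP => ?; case: leP => ?; lra.
Qed.

Lemma fna_prob_coupling_hi b0 b1 m :
  fna_prob b0 b1 (coupling m (coupling_hi m)) = fna_upper b0 b1 m.
Proof.
rewrite fna_probE /fna_upper /coupling_hi.
case: b0; case: b1 => /=;
  rewrite ?(subrr, mul0r, mulr0, mul1r, mulr1, subr0, addr0, add0r, minxx) //;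
  case: leP => ?; case: leP => ?; lra.
Qed.

Lemma fna_prob_coupling_convex b0 b1 m r r' t :
  fna_prob b0 b1 (coupling m ((1 - t) * r + t * r')) =
  (1 - t) * fna_prob b0 b1 (coupling m r) + t * fna_prob b0 b1 (coupling m r').
Proof. by rewrite !fna_probE; case: b0; case: b1 => /=; ring. Qed.

Lemma ratio_eq_mul (A Y e : R) : 0 <= A <= Y -> (0 < Y -> A / Y = e) -> A = e * Y.
Proof.
move=> /andP[A0 AY] h; have [Y0|Y0] := eqVneq Y 0.
  by rewrite Y0 mulr0; apply/eqP; rewrite eq_le A0 -Y0 AY.
by rewrite -h ?divfK // lt_def Y0 (le_trans A0 AY).
Qed.

Lemma convex_combination_onto (F G z : R) : F <= z -> z <= G ->
  exists2 t, 0 <= t <= 1 & (1 - t) * F + t * G = z.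
Proof.
move=> Fz zG; have [GF|GF] := eqVneq G F.
  exists 0; first by rewrite lexx ler01.
  by rewrite subr0 mul1r mul0r addr0; apply/eqP; rewrite eq_le Fz -GF zG.
have FG : 0 < G - F by rewrite subr_gt0 lt_def GF (le_trans Fz zG).
exists ((z - F) / (G - F)).
  by rewrite divr_ge0 ?subr_ge0 /= ?ler_pdivrMr //; lra.
by field; rewrite gt_eqF.
Qed.

Lemma convex_combination_between (a b t : R) : 0 <= t <= 1 -> a <= b ->
  a <= (1 - t) * a + t * b <= b.
Proof. by move=> /andP[t0 t1] ab; apply/andP; split; nra. Qed.

End PotentialOutcomeLaws.

Section FullLaw.
Variables (d : measure_display) (T : measurableType d) (R : realType).
Implicit Types (q : T -> bool -> bool -> bool -> R) (pi : T -> bool).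

Definition potential_law q x (y0 y1 : bool) : R := \sum_(a : bool) q x a y0 y1.

Definition fna_density q pi0 pi1 x : R :=
  \sum_(a : bool) \sum_(y0 : bool) \sum_(y1 : bool)
     (q x a y0 y1 * (pot y0 y1 (pi0 x) && ~~ pot y0 y1 (pi1 x) : bool)%:R).

Lemma fna_density_potential_law q pi0 pi1 x :
  fna_density q pi0 pi1 x = fna_prob (pi0 x) (pi1 x) (potential_law q x).
Proof. by rewrite /fna_density /fna_prob /potential_law !big_bool /=; ring. Qed.

Lemma full_Y_potential_law q x b y : full_Y q x b y = marginal (potential_law q x) b y.
Proof. by rewrite /full_Y /marginal /potential_law !big_bool /=; ring. Qed.

Lemma full_Y_split q x b y :
  full_Y q x b y = full_AY q x b y +
    \sum_(y0 : bool) \sum_(y1 : bool) q x false y0 y1 * (pot y0 y1 b == y)%:R.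
Proof. by rewrite /full_Y big_bool. Qed.

Lemma fna_density_ge0_le1 q pi0 pi1 x :
  (forall a y0 y1, 0 <= q x a y0 y1) ->
  \sum_(a : bool) \sum_(y0 : bool) \sum_(y1 : bool) q x a y0 y1 = 1 ->
  0 <= fna_density q pi0 pi1 x <= 1.
Proof.
move=> q0 q1; apply/andP; split.
  by do 3 (apply: sumr_ge0 => ? _); rewrite mulr_ge0.
rewrite -q1; do 3 (apply: ler_sum => ? _).
by rewrite ler_piMr // lern1 leq_b1.
Qed.

End FullLaw.

Section Identification.
Variables (d : measure_display) (T : measurableType d) (R : realType).
Variable p : T -> bool -> bool -> R.
Hypothesis pK : obs_kernel p.
Implicit Types (q : T -> bool -> bool -> bool -> R) (pi : T -> bool).

Definition treat_prob x (a : bool) : R := p x a false + p x a true.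

Lemma obs_ge0 x a y : 0 <= p x a y.
Proof. by case: pK => _ []. Qed.

Lemma treat_prob_sum x : treat_prob x false + treat_prob x true = 1.
Proof. by case: pK => _ [_ /(_ x)]; rewrite !big_bool /treat_prob /= => <-; ring. Qed.

Lemma treat_prob_mu_obs x a : treat_prob x a * mu_obs p x a = p x a true.
Proof.
rewrite /mu_obs -/(treat_prob x a); have [t0|t0] := eqVneq (treat_prob x a) 0.
  rewrite t0 mul0r; apply/esym/eqP; rewrite eq_le obs_ge0 andbT -t0 /treat_prob.
  by rewrite lerDr obs_ge0.
by rewrite mulrC divfK.
Qed.

Lemma mu_obs_ge0_le1 x a : 0 <= mu_obs p x a <= 1.
Proof.
have := obs_ge0 x a false; have := obs_ge0 x a true.
rewrite /mu_obs; have [t0|t0] := eqVneq (p x a false + p x a true) 0.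
  by rewrite t0 invr0 mulr0 lexx ler01.
move=> ? ?; have tp : 0 < p x a false + p x a true by rewrite lt_def t0 addr_ge0.
by rewrite divr_ge0 ?addr_ge0 //= ler_pdivrMr // mul1r lerDr.
Qed.

Lemma full_e_identified q x : (forall a y, coarsen q x a y = p x a y) ->
  full_e q x = treat_prob x true.
Proof.
move=> hc; rewrite /treat_prob -!hc /full_e /coarsen !big_bool /=; ring.
Qed.

Lemma potential_marginal_identified q x :
  0 < e_obs p x < 1 -> (forall a y0 y1, 0 <= q x a y0 y1) ->
  (forall a y, coarsen q x a y = p x a y) ->
  (forall b y, 0 < full_Y q x b y -> full_AY q x b y / full_Y q x b y = full_e q x) ->
  forall b, full_Y q x b true = mu_obs p x b.
Proof.
move=> /andP[e0 e1] q0 hc hu b.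
have nonneg (a : bool) (c : bool) :
    0 <= \sum_(y0 : bool) \sum_(y1 : bool) q x a y0 y1 * (pot y0 y1 c == true)%:R.
  by do 2 (apply: sumr_ge0 => ? _); rewrite mulr_ge0.
have AY : full_AY q x b true = treat_prob x true * full_Y q x b true.
  rewrite -(full_e_identified hc); apply: ratio_eq_mul (hu b true).
  by rewrite full_Y_split lerDl; apply/andP; split; apply: nonneg.
have tb : 0 < treat_prob x b.
  case: b {AY}; first exact: e0.
  by move: e1 (treat_prob_sum x); rewrite /e_obs /treat_prob; lra.
suff : treat_prob x b * full_Y q x b true = p x b true.
  by rewrite -(treat_prob_mu_obs x b) => /(mulfI (lt0r_neq0 tb)).
case: b tb AY => _ AY; first by rewrite -AY; exact: hc.
have := full_Y_split q x false true; rewrite -/(coarsen q x false true) hc AY => hY.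
apply: (addIr (treat_prob x true * full_Y q x false true)).
by rewrite -mulrDl treat_prob_sum mul1r addrC -hY.
Qed.

Lemma fna_density_bounds q pi0 pi1 x :
  0 < e_obs p x < 1 -> (forall a y0 y1, 0 <= q x a y0 y1) ->
  \sum_(a : bool) \sum_(y0 : bool) \sum_(y1 : bool) q x a y0 y1 = 1 ->
  (forall a y, coarsen q x a y = p x a y) ->
  (forall b y, 0 < full_Y q x b y -> full_AY q x b y / full_Y q x b y = full_e q x) ->
  fna_lower (pi0 x) (pi1 x) (mu_obs p x) <= fna_density q pi0 pi1 x
    <= fna_upper (pi0 x) (pi1 x) (mu_obs p x).
Proof.
move=> e01 q0 q1 hc hu; rewrite fna_density_potential_law; apply: fna_prob_bounds.
- by move=> y0 y1; apply: sumr_ge0 => a _.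
- by rewrite -q1 /potential_law !big_bool /=; ring.
- by move=> b; rewrite -full_Y_potential_law; exact: potential_marginal_identified.
Qed.

End Identification.

Section IndependentKernel.
Variables (d : measure_display) (T : measurableType d) (R : realType).
Variable p : T -> bool -> bool -> R.
Hypothesis pK : obs_kernel p.
Implicit Types (J : T -> bool -> bool -> R) (t : R).

Definition indep_kernel J x (a y0 y1 : bool) : R := treat_prob p x a * J x y0 y1.

Lemma indep_kernel_event J x a (E : bool -> bool -> R) :
  \sum_(y0 : bool) \sum_(y1 : bool) indep_kernel J x a y0 y1 * E y0 y1 =
  treat_prob p x a * \sum_(y0 : bool) \sum_(y1 : bool) J x y0 y1 * E y0 y1.
Proof.
rewrite mulr_sumr; apply: eq_bigr => y0 _; rewrite mulr_sumr.
by apply: eq_bigr => y1 _; rewrite mulrA.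
Qed.

Lemma indep_kernel_sum J x a :
  \sum_(y0 : bool) \sum_(y1 : bool) indep_kernel J x a y0 y1 =
  treat_prob p x a * \sum_(y0 : bool) \sum_(y1 : bool) J x y0 y1.
Proof. by rewrite /indep_kernel !big_bool /=; ring. Qed.

Lemma potential_law_indep J x : potential_law (indep_kernel J) x = J x.
Proof.
apply/funext => y0; apply/funext => y1.
by rewrite /potential_law /indep_kernel -mulr_suml big_bool /= addrC treat_prob_sum ?mul1r.
Qed.

Lemma coarsen_indep J x a y :
  coarsen (indep_kernel J) x a y = treat_prob p x a * marginal (J x) a y.
Proof. exact: indep_kernel_event. Qed.

Lemma unconfounded_indep (mu : probability T R) J :
  (forall x, \sum_(y0 : bool) \sum_(y1 : bool) J x y0 y1 = 1) ->
  unconfounded mu (indep_kernel J).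
Proof.
move=> J1; apply: aeW => x b y.
have eY : full_Y (indep_kernel J) x b y = marginal (J x) b y.
  by rewrite full_Y_potential_law potential_law_indep.
have eAY : full_AY (indep_kernel J) x b y = treat_prob p x true * marginal (J x) b y.
  exact: indep_kernel_event.
have ee : full_e (indep_kernel J) x = treat_prob p x true.
  by rewrite /full_e indep_kernel_sum J1 mulr1.
by rewrite eY eAY ee => Y0; rewrite mulfK // lt0r_neq0.
Qed.

Definition coupling_kernel t : T -> bool -> bool -> bool -> R :=
  indep_kernel (fun x => coupling (mu_obs p x)
    ((1 - t) * coupling_lo (mu_obs p x) + t * coupling_hi (mu_obs p x))).

Lemma coarsen_coupling_kernel t x a y : coarsen (coupling_kernel t) x a y = p x a y.
Proof.
rewrite coarsen_indep marginal_coupling; case: y; first exact: treat_prob_mu_obs.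
by rewrite mulrBr mulr1 treat_prob_mu_obs // /treat_prob addrK.
Qed.

Lemma fna_density_coupling_kernel t (pi0 pi1 : T -> bool) x :
  fna_density (coupling_kernel t) pi0 pi1 x =
  (1 - t) * fna_lower (pi0 x) (pi1 x) (mu_obs p x) + t * fna_upper (pi0 x) (pi1 x) (mu_obs p x).
Proof.
by rewrite fna_density_potential_law potential_law_indep fna_prob_coupling_convex
  fna_prob_coupling_lo fna_prob_coupling_hi.
Qed.

Lemma coupling_kernel_ge0 t x a y0 y1 : 0 <= t <= 1 -> 0 <= coupling_kernel t x a y0 y1.
Proof.
move=> t01; apply: mulr_ge0; first by rewrite addr_ge0 ?obs_ge0.
apply: coupling_ge0.
exact: convex_combination_between t01 (coupling_lo_le_hi (mu_obs_ge0_le1 pK x)).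
Qed.

Lemma coupling_kernel_sum t x :
  \sum_(a : bool) \sum_(y0 : bool) \sum_(y1 : bool) coupling_kernel t x a y0 y1 = 1.
Proof.
under eq_bigr do rewrite indep_kernel_sum coupling_sum mulr1.
by rewrite big_bool /= addrC treat_prob_sum.
Qed.

End IndependentKernel.

Lemma measurable_inv (R : realType) : measurable_fun [set: R] (@GRing.inv R).
Proof.
have -> : @GRing.inv R = (fun x => if x == 0 then 0 else x^-1).
  by apply/funext => x; case: eqP => // ->; rewrite invr0.
apply: measurable_fun_if => //; first exact: measurable_fun_eqr.
rewrite setTI (_ : _ @^-1` [set false] = ~` [set 0]).
  apply: open_continuous_measurable_fun; last by move=> x /set_mem/eqP; exact: inv_continuous.
  by rewrite openC; exact/accessible_closed_set1/hausdorff_accessible/Rhausdorff.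
by apply/seteqP; split => x /=; case: eqP.
Qed.

Section Measurability.
Variables (d : measure_display) (T : measurableType d) (R : realType).
Variable p : T -> bool -> bool -> R.
Hypothesis pK : obs_kernel p.

Lemma measurable_mu_obs a : measurable_fun setT (fun x => mu_obs p x a).
Proof.
have mp y : measurable_fun setT (fun x => p x a y) by case: pK => + _; apply.
apply: measurable_funM; first exact: mp.
exact: measurableT_comp (@measurable_inv R) (measurable_funD (mp false) (mp true)).
Qed.

Lemma measurable_coupling_kernel t a y0 y1 :
  measurable_fun setT (fun x => coupling_kernel p t x a y0 y1).
Proof.
have [m0 m1] := (measurable_mu_obs false, measurable_mu_obs true).
have mlo : measurable_fun setT (fun x => coupling_lo (mu_obs p x)).
  by apply: measurable_maxr; [exact: measurable_funB | exact: measurable_cst].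
have mhi : measurable_fun setT (fun x => coupling_hi (mu_obs p x)).
  by apply: measurable_minr => //; apply: measurable_funB => //; exact: measurable_cst.
have mr : measurable_fun setT (fun x =>
    (1 - t) * coupling_lo (mu_obs p x) + t * coupling_hi (mu_obs p x)).
  by apply: measurable_funD; apply: measurable_funM => //; exact: measurable_cst.
apply: measurable_funM.
  by case: pK => mp _; exact: measurable_funD.
case: y0; case: y1 => /=.
- exact: measurable_funB.
- exact: mr.
- by apply: measurable_funD => //; exact: measurable_funB.
- by apply: measurable_funB => //; apply: measurable_funB => //; exact: measurable_cst.
Qed.

End Measurability.

Lemma measurable_fna_density (d : measure_display) (T : measurableType d) (R : realType)
    (q : T -> bool -> bool -> bool -> R) (pi0 pi1 : T -> bool) :
  (forall a y0 y1, measurable_fun setT (fun x => q x a y0 y1)) ->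
  measurable_fun setT pi0 -> measurable_fun setT pi1 ->
  measurable_fun setT (fna_density q pi0 pi1).
Proof.
move=> mq mpi0 mpi1.
have mJ y0 y1 : measurable_fun setT (fun x => potential_law q x y0 y1).
  by rewrite /potential_law; under eq_fun do rewrite big_bool; exact: measurable_funD.
rewrite (_ : fna_density q pi0 pi1 = fun x => if pi0 x
    then (if pi1 x then 0 else potential_law q x false true)
    else (if pi1 x then potential_law q x true false else 0)); last first.
  by apply/funext => x; rewrite fna_density_potential_law fna_probE.
by do 3 ?[apply: measurable_fun_ifT | exact: measurable_cst].
Qed.

Section Integration.
Variables (d : measure_display) (T : measurableType d) (R : realType).
Local Open Scope ereal_scope.

Lemma integrable_ge0_le1 (mu : probability T R) (f : T -> R) :
  measurable_fun setT f -> (forall x, (0 <= f x <= 1)%R) ->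
  mu.-integrable setT (EFin \o f).
Proof.
move=> mf f01; apply: measurable_bounded_integrable => //.
  by apply: (le_lt_trans (probability_le1 mu measurableT)); exact: ltry.
exists 1%R; split => // M M1 x _ /=; have /andP[f0 f1] := f01 x.
by rewrite ger0_norm // (le_trans f1) // ltW.
Qed.

Lemma integral_convex_combination_onto (mu : {measure set T -> \bar R}) (f g : T -> R) z :
  mu.-integrable setT (EFin \o f) -> mu.-integrable setT (EFin \o g) ->
  \int[mu]_x (f x)%:E <= z <= \int[mu]_x (g x)%:E ->
  exists2 t : R, (0 <= t <= 1)%R & \int[mu]_x ((1 - t) * f x + t * g x)%:E = z.
Proof.
move=> intf intg.
have /fineK Ef := integrable_fin_num measurableT intf.
have /fineK Eg := integrable_fin_num measurableT intg.
have combE t : \int[mu]_x ((1 - t) * f x + t * g x)%:E =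
    ((1 - t) * fine (\int[mu]_x (f x)%:E) + t * fine (\int[mu]_x (g x)%:E))%:E.
  under eq_integral do rewrite EFinD !EFinM.
  by rewrite integralD ?integralZl ?EFinD ?EFinM ?Ef ?Eg //; exact: integrableZl.
rewrite -Ef -Eg; case: z => [z | |] /andP[]; rewrite ?leey ?leNye // !lee_fin => fz zg.
have [t t01 tz] := convex_combination_onto fz zg.
by exists t; rewrite // combE tz.
Qed.

End Integration.

Section IdentifiedSet.
Variables (d : measure_display) (T : measurableType d) (R : realType).
Variables (mu : probability T R) (p : T -> bool -> bool -> R).
Hypotheses (pK : obs_kernel p) (e01 : {ae mu, forall x, 0 < e_obs p x < 1}).
Variables (pi0 pi1 : T -> bool).
Hypotheses (mpi0 : measurable_fun setT pi0) (mpi1 : measurable_fun setT pi1).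
Let lower x := fna_lower (pi0 x) (pi1 x) (mu_obs p x).
Let upper x := fna_upper (pi0 x) (pi1 x) (mu_obs p x).

Lemma full_kernel_coupling_kernel (t : R) : 0 <= t <= 1 -> full_kernel (coupling_kernel p t).
Proof.
move=> t01; split; first exact: measurable_coupling_kernel.
by split=> [x a y0 y1|x]; [exact: coupling_kernel_ge0 | exact: coupling_kernel_sum].
Qed.

Lemma integrable_fna_density q : full_kernel q ->
  mu.-integrable setT (EFin \o fna_density q pi0 pi1).
Proof.
move=> [mq [q0 q1]]; apply: integrable_ge0_le1; first exact: measurable_fna_density.
by move=> x; exact: fna_density_ge0_le1.
Qed.

Lemma fna_density_coupling_kernel_lower : fna_density (coupling_kernel p 0) pi0 pi1 = lower.
Proof. by apply/funext => x; rewrite fna_density_coupling_kernel // /lower; ring. Qed.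

Lemma fna_density_coupling_kernel_upper : fna_density (coupling_kernel p 1) pi0 pi1 = upper.
Proof. by apply/funext => x; rewrite fna_density_coupling_kernel // /upper; ring. Qed.

Lemma integrable_lower : mu.-integrable setT (EFin \o lower).
Proof.
rewrite -fna_density_coupling_kernel_lower; apply: integrable_fna_density.
by apply: full_kernel_coupling_kernel; rewrite lexx ler01.
Qed.

Lemma integrable_upper : mu.-integrable setT (EFin \o upper).
Proof.
rewrite -fna_density_coupling_kernel_upper; apply: integrable_fna_density.
by apply: full_kernel_coupling_kernel; rewrite lexx ler01.
Qed.

Lemma FNA_bounds q : full_kernel q ->
  {ae mu, forall x a y, coarsen q x a y = p x a y} -> unconfounded mu q ->
  (FNA_lo mu p pi0 pi1 <= FNA mu q pi0 pi1 <= FNA_hi mu p pi0 pi1)%E.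
Proof.
move=> qK qc qu; have [mq [q0 q1]] := qK.
have bounds : {ae mu, forall x, [set: T] x ->
    lower x <= fna_density q pi0 pi1 x <= upper x}.
  apply: (filterS3 (ae_filter_ringOfSetsType mu) _ e01 qc qu) => x ex cx ux _.
  exact: fna_density_bounds.
have ml := measurable_int _ integrable_lower.
have mup := measurable_int _ integrable_upper.
have mf := measurable_int _ (integrable_fna_density qK).
have f0 x : 0 <= fna_density q pi0 pi1 x.
  by case/andP: (fna_density_ge0_le1 pi0 pi1 (q0 x) (q1 x)).
apply/andP; split; apply: ae_ge0_le_integral => //.
- by move=> x _; rewrite lee_fin le_max lexx orbT.
- by move=> x _; rewrite lee_fin; exact: f0.
- by apply: filterS bounds => x h /h /andP[+ _]; rewrite lee_fin.
- by move=> x _; rewrite lee_fin; exact: f0.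
- by move=> x _; rewrite lee_fin fna_upper_ge0 // => b; exact: mu_obs_ge0_le1.
- by apply: filterS bounds => x h /h /andP[_]; rewrite lee_fin.
Qed.

Lemma coupling_kernel_identified (t : R) : 0 <= t <= 1 ->
  full_kernel (coupling_kernel p t) /\
  {ae mu, forall x a y, coarsen (coupling_kernel p t) x a y = p x a y} /\
  unconfounded mu (coupling_kernel p t).
Proof.
move=> t01; split; first exact: full_kernel_coupling_kernel.
split; first by apply: aeW => x a y; exact: coarsen_coupling_kernel.
by apply: unconfounded_indep => // x; exact: coupling_sum.
Qed.

Lemma FNA_coupling_kernel (t : R) :
  FNA mu (coupling_kernel p t) pi0 pi1 = (\int[mu]_x ((1 - t) * lower x + t * upper x)%:E)%E.
Proof. by apply: eq_integral => x _; congr EFin; exact: fna_density_coupling_kernel. Qed.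

Lemma ident_set_FNA :
  ident_set mu p pi0 pi1 = [set z | (FNA_lo mu p pi0 pi1 <= z <= FNA_hi mu p pi0 pi1)%E].
Proof.
apply/seteqP; split=> [_ [q [qK [qc qu]] <-] | z zLH]; first exact: FNA_bounds.
have [t t01 <-] := integral_convex_combination_onto integrable_lower integrable_upper zLH.
exists (coupling_kernel p t); first exact: coupling_kernel_identified.
exact: FNA_coupling_kernel.
Qed.

End IdentifiedSet.

Section NoneToAll.
Variables (d : measure_display) (T : measurableType d) (R : realType).
Variables (mu : probability T R) (p : T -> bool -> bool -> R).
Local Open Scope ereal_scope.

Lemma FNA_lo_none_to_all :
  FNA_lo mu p (fun=> false) (fun=> true) = - \int[mu]_x (Num.min (tau p x) 0)%:E.
Proof.
have -> : \int[mu]_x (Num.min (tau p x) 0)%:E = \int[mu]_x - (- Num.min (tau p x) 0)%:E.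
  by apply: eq_integral => x _; rewrite EFinN oppeK.
rewrite integral_ge0N ?oppeK => [|x _]; last by rewrite lee_fin oppr_ge0 ge_min lexx orbT.
apply: eq_integral => x _; congr EFin.
by rewrite /= mulr0n mulr1n sub0r mulN1r oppr_min oppr0.
Qed.

Lemma FNA_hi_none_to_all : FNA_hi mu p (fun=> false) (fun=> true) =
  \int[mu]_x (Num.min (mu_obs p x false) (1 - mu_obs p x true))%:E.
Proof. by apply: eq_integral => x _; congr (EFin (Num.min _ _)) => /=; ring. Qed.

End NoneToAll.

Unset Implicit Arguments.

Theorem theorem2 (d : measure_display) (T : measurableType d) (R : realType)
  (mu : probability T R) (p : T -> bool -> bool -> R) :
  obs_kernel p ->
  {ae mu, forall x, 0 < e_obs p x < 1} ->
  (forall pi0 pi1 : T -> bool,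
      measurable_fun setT pi0 -> measurable_fun setT pi1 ->
      ident_set mu p pi0 pi1 =
      [set z | (FNA_lo mu p pi0 pi1 <= z <= FNA_hi mu p pi0 pi1)%E]) /\
  ident_set mu p (fun _ => false) (fun _ => true) =
  [set z | (- (\int[mu]_x (Num.min (tau p x) 0)%:E) <= z
            <= \int[mu]_x (Num.min (mu_obs p x false) (1 - mu_obs p x true))%:E)%E].
Proof.
move=> pK e01; split=> [pi0 pi1 mpi0 mpi1 | ]; first exact: ident_set_FNA.
by rewrite ident_set_FNA // ?FNA_lo_none_to_all ?FNA_hi_none_to_all //; exact: measurable_cst.
Qed.
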